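(* Let $I$ be a finite set, $\tau$ a total order of $I$, and $A,B$ set compositions of $I$ with $\mathrm{Asc}(A)\subseteq\tau$. Then, as maps $\mathsf{cf}(\mathrm{UL}(\tau,A))\to\mathsf{cf}(\mathrm{UL}(\tau,B))$, $$\mathrm{Resf}^{\mathrm{UT}(\tau)}_{\mathrm{UL}(\tau,B)}\circ\mathrm{Inf}^{\mathrm{UT}(\tau)}_{\mathrm{UL}(\tau,A)}=\Big(\bigotimes_{j=1}^{\ell(B)}\mathrm{Inf}^{\mathrm{UT}(\tau|_{B_j})}_{\mathrm{UL}(\tau|_{B_j},A|_{B_j})}\Big)\circ\Big(\bigotimes_{i=1}^{\ell(A)}\mathrm{Resf}^{\mathrm{UT}(\tau|_{A_i})}_{\mathrm{UL}(\tau|_{A_i},B|_{A_i})}\Big),$$ where the intermediate space $\mathsf{cf}(\mathrm{UL}(\tau,A\wedge B))=\mathsf{cf}(\mathrm{UL}(\tau,B\wedge A))$ is identified with both $\bigotimes_i\mathsf{cf}(\mathrm{UL}(\tau|_{A_i},B|_{A_i}))$ and $\bigotimes_j\mathsf{cf}(\mathrm{UL}(\tau|_{B_j},A|_{B_j}))$.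
   Context: Fix the finite field $\mathbb{F}_q$. For a finite set $I$, $\mathrm{GL}(I)$ is the group of invertible $I\times I$ matrices over $\mathbb{F}_q$ with identity $1_I$. A total order $\tau$ of $I$ is a reflexive, antisymmetric, transitive, total relation $\tau\subseteq I\times I$; $\tau|_J=\tau\cap(J\times J)$. For a relation $\pi$ containing the diagonal, $\mathrm{UT}(\pi)=\{X\in\mathrm{GL}(I):(X-1_I)_{i,j}\ne0\text{ only if }(i,j)\in\pi\}$. A set composition $A=(A_1,\dots,A_\ell)$ of $I$ is a sequence of pairwise disjoint nonempty sets with union $I$; for $J\subseteq I$, $C|_J$ is $(C_1\cap J,\dots)$ with empty sets removed; the Tits product is $A\wedge B=B|_{A_1}\cdots B|_{A_{\ell(A)}}$ (concatenation). $\mathrm{Asc}(A)=\bigsqcup_{r<s}A_r\times A_s$, $\mathrm{Eq}(A)=\bigsqcup_rA_r\times A_r$. $\mathrm{UL}(\tau,A)=\mathrm{UT}(\tau\cap\mathrm{Eq}(A))$, $\mathrm{UR}(\tau,A)=\mathrm{UT}(\{(i,i)\}\cup(\tau\cap\mathrm{Asc}(A)))$, $\mathrm{UP}(\tau,A)=\mathrm{UT}(\tau\cap(\mathrm{Eq}(A)\cup\mathrm{Asc}(A)))=\mathrm{UL}(\tau,A)\ltimes\mathrm{UR}(\tau,A)$; if $\mathrm{Asc}(A)\subseteq\tau$ then $\mathrm{UP}(\tau,A)=\mathrm{UT}(\tau)$. $\mathrm{UL}(\tau,A)=\mathrm{UT}(\tau|_{A_1})\oplus\cdots\oplus\mathrm{UT}(\tau|_{A_\ell})$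 (block diagonal), so $\mathsf{cf}(\mathrm{UL}(\tau,A))\cong\bigotimes_i\mathsf{cf}(\mathrm{UT}(\tau|_{A_i}))$; also $\mathrm{UL}(\tau,A\wedge B)=\mathrm{UL}(\tau,A)\cap\mathrm{UL}(\tau,B)=\mathrm{UL}(\tau,B\wedge A)$. $\mathsf{cf}(G)$ is the space of complex class functions on $G$. For $\mathrm{UT}(\tau)=\mathrm{UL}(\tau,A)\ltimes\mathrm{UR}(\tau,A)$, $\mathrm{Inf}^{\mathrm{UT}(\tau)}_{\mathrm{UL}(\tau,A)}\psi(lr)=\psi(l)$. $\mathrm{Resf}^{\mathrm{UT}(\tau)}_{\mathrm{UL}(\tau,B)}=\mathrm{Def}^{\mathrm{UP}(\tau,B)}_{\mathrm{UL}(\tau,B)}\circ\mathrm{Res}^{\mathrm{UT}(\tau)}_{\mathrm{UP}(\tau,B)}$ with $\mathrm{Def}^{\mathrm{UP}(\tau,B)}_{\mathrm{UL}(\tau,B)}\psi(g)=\frac1{|\mathrm{UR}(\tau,B)|}\sum_{x\in\mathrm{UR}(\tau,B)}\psi(gx)$. *)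

From HB Require Import structures.
From mathcomp Require Import all_boot all_order all_algebra.
From mathcomp Require Import algC.
Set Implicit Arguments. Unset Strict Implicit. Unset Printing Implicit Defensive.
Import GRing.Theory Num.Theory.
Local Open Scope ring_scope.

(* The finite set I is 'I_n; matrices I x I over the finite field F are 'M[F]_n.
   Class functions take values in algC (complex algebraic numbers). *)

Notation Mx F n := 'M[F]_n.

Definition total_order (n : nat) (tau : rel 'I_n) : Prop :=
  [/\ reflexive tau, antisymmetric tau, transitive tau & total tau].

Definition rrestr (n : nat) (tau : rel 'I_n) (J : {set 'I_n}) : rel 'I_n :=
  fun i j => [&& tau i j, i \in J & j \in J].

Definition is_setcomp (n : nat) (J : {set 'I_n}) (A : seq {set 'I_n}) : bool :=
  [&& all (fun a => a != set0) A,
      pairwise (fun a b : {set 'I_n} => [disjoint a & b]) A &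
      \bigcup_(a <- A) a == J].

Definition crestr (n : nat) (C : seq {set 'I_n}) (J : {set 'I_n}) : seq {set 'I_n} :=
  [seq c :&: J | c <- C & c :&: J != set0].

Definition tits (n : nat) (A B : seq {set 'I_n}) : seq {set 'I_n} :=
  flatten [seq crestr B a | a <- A].

Definition eqrel (n : nat) (A : seq {set 'I_n}) : rel 'I_n :=
  fun i j => has (fun a : {set 'I_n} => (i \in a) && (j \in a)) A.

Definition ascrel (n : nat) (A : seq {set 'I_n}) : rel 'I_n :=
  fun i j => [exists r : 'I_(size A), exists s : 'I_(size A),
     [&& (r < s)%N, i \in nth set0 A r & j \in nth set0 A s]].

(* For pi = tau|_J this is UT(tau|_J)
   embedded in GL(I) as X |-> X (+) 1_{I \ J}. *)
Definition UT (F : finFieldType) (n : nat) (pi : rel 'I_n) : {set Mx F n} :=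
  [set X : Mx F n | [&& X \in unitmx,
     [forall i, X i i == 1] &
     [forall i, forall j, ((i != j) && (X i j != 0)) ==> pi i j]]].

Definition UL (F : finFieldType) (n : nat) (tau : rel 'I_n) (A : seq {set 'I_n}) :=
  UT F (fun i j => tau i j && eqrel A i j).

Definition UR (F : finFieldType) (n : nat) (tau : rel 'I_n) (A : seq {set 'I_n}) :=
  UT F (fun i j => (i == j) || (tau i j && ascrel A i j)).

(* Complex-valued functions on matrices; a class function on G is one
   invariant under G-conjugation (only its values on G matter). *)
Definition cfun (F : finFieldType) (n : nat) := Mx F n -> algC.

Definition is_classfun (F : finFieldType) (n : nat) (G : {set Mx F n})
    (psi : cfun F n) : Prop :=
  forall g x, g \in G -> x \in G -> psi (invmx g *m x *m g) = psi x.

Definition infl (F : finFieldType) (n : nat) (L R : {set Mx F n})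
    (psi : cfun F n) : cfun F n :=
  fun g => match [pick p : Mx F n * Mx F n |
                   [&& p.1 \in L, p.2 \in R & p.1 *m p.2 == g]] with
           | Some p => psi p.1
           | None => 0
           end.

Definition resf (F : finFieldType) (n : nat) (R : {set Mx F n})
    (psi : cfun F n) : cfun F n :=
  fun g => (#|R|%:R)^-1 * \sum_(x in R) psi (g *m x).

Definition delta (F : finFieldType) (n : nat) (g : Mx F n) : cfun F n :=
  fun x => (x == g)%:R.

Definition blk (F : finFieldType) (n : nat) (J : {set 'I_n}) (X : Mx F n) : Mx F n :=
  \matrix_(i, j) if (i \in J) && (j \in J) then X i j else (i == j)%:R.

(* Tensor product of linear maps f_J (one for each block J of the set
   composition Js), acting on cf(G) ~ (x)_J cf(G_J), where G is the
   block-diagonal group identified with prod_J G_J via g |-> (blk J g)_J.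
   Written in the basis of delta functions:
   ((x)_J f_J) Phi (h) = sum_{g in G} (prod_J f_J(delta_{g_J})(h_J)) Phi(g). *)
Definition tensor_map (F : finFieldType) (n : nat) (Js : seq {set 'I_n})
    (f : {set 'I_n} -> cfun F n -> cfun F n) (G : {set Mx F n})
    (Phi : cfun F n) : cfun F n :=
  fun h => \sum_(g in G) (\prod_(J <- Js) f J (delta (blk J g)) (blk J h)) * Phi g.

(* Let d_A X keep the diagonal of X and its entries inside the diagonal blocks of A.
   Since Asc(A) is contained in tau, every element of UT(tau) is block upper triangular
   for A, so d_A is multiplicative on UT(tau); it fixes UL(tau, A) and kills UR(tau, A),
   whence Inf psi = psi o d_A.  Let Q = UT(tau /\ Asc(B) /\ Eq(A)) = UR(tau, B) /\ UL(tau, A).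
   As a set, UR(tau, B) is the product of Q with the matrices of UR(tau, B) supported
   outside Eq(A), and d_A is the projection onto the first factor; so the left-hand side
   at h is the average of psi (d_A h * y) over y in Q.  On the right, the tensor product
   of the blockwise inflations applied to a delta function at g is the indicator of
   g = d_A h, and the tensor product of the blockwise deflations is |Q|^-1 times the
   indicator of (d_A h)^-1 g in Q, because Q is the block-diagonal product of the groups
   UR(tau|_J, B|_J) over the blocks J of A.  Summing over g gives the same average. *)

From HB Require Import structures.
From mathcomp Require Import all_boot all_order all_algebra.
From mathcomp Require Import algC zify.
Import GRing.Theory Num.Theory.
Local Open Scope ring_scope.
Set Implicit Arguments. Unset Strict Implicit. Unset Printing Implicit Defensive.

Lemma sumr_neq0_term (R : nmodType) (I : finType) (P : pred I) (f : I -> R) :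
  \sum_(k | P k) f k != 0 -> exists2 k, P k & f k != 0.
Proof.
move=> nz; apply/exists_inP; apply: contraNT nz => /exists_inPn f0.
by apply/eqP/big1 => k /f0; rewrite negbK => /eqP.
Qed.

Lemma sum_indicator (R : pzSemiRingType) (T : finType) (S : {pred T}) (x0 : T) :
  \sum_(x in S) (x == x0)%:R = (x0 \in S)%:R :> R.
Proof.
have [x0S | x0S] := boolP (x0 \in S); last first.
  by rewrite big1 // => x xS; case: eqP => // ex; rewrite -ex xS in x0S.
by rewrite (bigD1 x0) //= eqxx big1 ?addr0 // => x /andP[_ /negbTE ->].
Qed.

Lemma prod_indicator (R : pzSemiRingType) (I : Type) (s : seq I) (b : pred I) :
  \prod_(J <- s) (b J)%:R = (all b s)%:R :> R.
Proof.
elim: s => [|x s IHs]; rewrite ?big_nil ?big_cons //= IHs.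
by case: (b x); rewrite ?mul1r ?mul0r.
Qed.

Section PatternGroups.
Variables (F : finFieldType) (n : nat) (tau : rel 'I_n).
Hypothesis tau_total : total_order tau.
Implicit Types (pi p : rel 'I_n) (X Y : 'M[F]_n).

Definition offdiag_sub pi := [forall i, forall j, (i != j) && pi i j ==> tau i j].

Definition pattern_mx pi X :=
  (forall i, X i i = 1) /\ (forall i j, i != j -> X i j != 0 -> pi i j).

Lemma tau_trans : transitive tau. Proof. by case: tau_total. Qed.

Lemma offdiag_subP pi : reflect (forall i j, i != j -> pi i j -> tau i j) (offdiag_sub pi).
Proof.
apply: (iffP forallP) => [sub i j nij pij | sub i].
  by have /forallP/(_ j) := sub i; rewrite nij pij.
by apply/forallP => j; apply/implyP => /andP[]; apply: sub.
Qed.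

Lemma offdiag_sub_tau : offdiag_sub tau.
Proof. exact/offdiag_subP. Qed.

Lemma offdiag_subI pi p : offdiag_sub pi -> offdiag_sub (fun i j => pi i j && p i j).
Proof. by move/offdiag_subP=> sub; apply/offdiag_subP => i j nij /andP[/(sub _ _ nij)]. Qed.

Definition tau_rank (i : 'I_n) := #|[set k | tau k i]|.

Lemma tau_rank_lt i j : i != j -> tau i j -> (tau_rank i < tau_rank j)%N.
Proof.
case: tau_total => tau_refl tau_anti _ _ nij tij.
apply: proper_card; apply/properP; split.
  by apply/subsetP => k; rewrite !inE => tki; apply: tau_trans tij.
exists j; rewrite !inE ?tau_refl //; apply: contra nij => tji.
by apply/eqP/tau_anti; rewrite tij.
Qed.

Lemma tau_rank_le i : (tau_rank i <= n)%N.
Proof. by rewrite /tau_rank (leq_trans (max_card _)) ?card_ord. Qed.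

Lemma pattern_mx0 pi X i j : pattern_mx pi X -> i != j -> ~~ pi i j -> X i j = 0.
Proof. by case=> _ Xpi nij; apply: contraNeq; apply: Xpi. Qed.

(* A nonzero entry of (X - 1)^k at (i, j) requires a tau-chain of length k from i to j. *)
Lemma pattern_mx_nilpotent pi X :
  offdiag_sub pi -> pattern_mx pi X -> (X - 1) ^+ n.+1 = 0.
Proof.
move=> /offdiag_subP pi_tau [Xdiag Xpi]; set N := X - 1.
have N_entry i j : N i j = if i == j then 0 else X i j.
  by rewrite /N -idmxE !mxE; case: eqP => [->|]; rewrite ?Xdiag ?subrr ?subr0.
have chain k i j : (N ^+ k) i j != 0 -> (tau_rank i + k <= tau_rank j)%N.
  elim: k i j => [|k IHk] i j.
    rewrite expr0 -idmxE mxE; have [->|_] := eqVneq i j; first by rewrite addn0.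
    by rewrite eqxx.
  rewrite exprS -mulmxE mxE => /sumr_neq0_term[l _].
  rewrite mulf_eq0 negb_or => /andP[nzN /IHk].
  have nil : i != l by apply: contraNneq nzN => ->; rewrite N_entry eqxx.
  rewrite N_entry (negbTE nil) in nzN.
  have := tau_rank_lt nil (pi_tau _ _ nil (Xpi _ _ nil nzN)); lia.
apply/matrixP => i j; rewrite [RHS]mxE; apply: contraTeq (tau_rank_le j) => /chain.
lia.
Qed.

Lemma pattern_mx_unit pi X : offdiag_sub pi -> pattern_mx pi X -> X \in unitmx.
Proof.
move=> pi_tau Xpi; have := subrX1 (- (X - 1)) n.+1.
rewrite exprNn (pattern_mx_nilpotent pi_tau Xpi) mulr0 sub0r -opprD subrK mulNr.
by move=> /oppr_inj/esym; rewrite -mulmxE -[1]idmxE => /mulmx1_unit[].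
Qed.

Lemma UTP pi (pi_tau : offdiag_sub pi) X : reflect (pattern_mx pi X) (X \in UT F pi).
Proof.
rewrite inE; apply: (iffP and3P) => [[_ /forallP d /forallP o] | [d o]].
  split => [i|i j nij nz]; first exact/eqP/d.
  by have /forallP/(_ j)/implyP := o i; apply; rewrite nij nz.
split; first exact: (@pattern_mx_unit pi).
  by apply/forallP => i; apply/eqP/d.
by apply/forallP => i; apply/forallP => j; apply/implyP => /andP[]; apply: o.
Qed.

Lemma UT_subrel pi pi' X : (forall i j, i != j -> pi i j -> pi' i j) ->
  X \in UT F pi -> X \in UT F pi'.
Proof.
move=> pipi'; rewrite !inE => /and3P[-> -> /forallP o] /=.
apply/forallP => i; apply/forallP => j; apply/implyP => /andP[nij nz].
by apply: pipi' => //; have /forallP/(_ j)/implyP := o i; apply; rewrite nij nz.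
Qed.

Lemma eq_UT pi pi' : (forall i j, i != j -> pi i j = pi' i j) -> UT F pi = UT F pi'.
Proof.
by move=> epi; apply/setP => X; apply/idP/idP; apply: UT_subrel => i j nij; rewrite epi.
Qed.

Lemma UT1 pi : offdiag_sub pi -> 1%:M \in UT F pi.
Proof.
move=> pi_tau; apply/UTP => //; split => [i|i j nij]; rewrite mxE ?eqxx //.
by rewrite (negbTE nij) eqxx.
Qed.

Lemma UT_unitmx pi X : X \in UT F pi -> X \in unitmx.
Proof. by rewrite inE => /and3P[]. Qed.

Lemma UT_mulmx pi X Y : offdiag_sub pi -> transitive pi ->
  X \in UT F pi -> Y \in UT F pi -> X *m Y \in UT F pi.
Proof.
move=> pi_tau pi_trans /(UTP pi_tau)[dX oX] /(UTP pi_tau)[dY oY].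
apply/UTP => //; move/offdiag_subP: pi_tau => pi_tau; split => [i|i j nij].
  rewrite mxE (bigD1 i) //= dX dY mulr1 big1 ?addr0 // => k nki.
  apply: contraTeq isT; rewrite mulf_eq0 negb_or => /andP[nzX nzY].
  have nik : i != k by rewrite eq_sym.
  have := tau_rank_lt nik (pi_tau _ _ nik (oX _ _ nik nzX)).
  have := tau_rank_lt nki (pi_tau _ _ nki (oY _ _ nki nzY)); lia.
rewrite mxE => /sumr_neq0_term[k _]; rewrite mulf_eq0 negb_or => /andP[nzX nzY].
have [eik|nik] := eqVneq i k; first by subst k; apply: oY.
have [ekj|nkj] := eqVneq k j; first by subst k; apply: oX.
by apply: (pi_trans k); [apply: oX | apply: oY].
Qed.

Lemma UT_diag pi : (forall i j, i != j -> ~~ pi i j) -> UT F pi = [set 1%:M].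
Proof.
move=> pi0; have pi_tau : offdiag_sub pi by apply/offdiag_subP => i j /pi0/negP.
apply/setP => X; rewrite in_set1; apply/idP/eqP => [/(UTP pi_tau) Xpi|->]; last exact: UT1.
apply/matrixP => i j; rewrite mxE; have [<-|nij] := eqVneq i j; first by rewrite Xpi.1.
exact: pattern_mx0 Xpi nij (pi0 _ _ nij).
Qed.

(* A finite set of units closed under multiplication is closed under inversion. *)
Lemma UT_invmx pi X : offdiag_sub pi -> transitive pi ->
  X \in UT F pi -> invmx X \in UT F pi.
Proof.
move=> pi_tau pi_trans XU; have Xu := UT_unitmx XU.
have mulX_inj : {in UT F pi &, injective (mulmx X)}.
  by move=> Y Z _ _ /(congr1 (mulmx (invmx X))); rewrite !mulKmx.
have mulX_UT : [set X *m Y | Y in UT F pi] = UT F pi.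
  apply/eqP; rewrite eqEcard (card_in_imset mulX_inj) leqnn andbT.
  by apply/subsetP => _ /imsetP[Y YU ->]; apply: UT_mulmx.
have /imsetP[Y YU XY1] : 1%:M \in [set X *m Y | Y in UT F pi] by rewrite mulX_UT UT1.
by rewrite -[invmx X]mulmx1 XY1 mulKmx.
Qed.

Definition mx_mask p X : 'M[F]_n :=
  \matrix_(i, j) if (i == j) || p i j then X i j else 0.

Lemma mx_mask_id pi p X : pattern_mx pi X ->
  (forall i j, i != j -> pi i j -> p i j) -> mx_mask p X = X.
Proof.
move=> Xpi pip; apply/matrixP => i j; rewrite mxE.
have [//|nij /=] := eqVneq i j; case: ifP => // npij.
by rewrite (pattern_mx0 Xpi nij) //; apply: contraFN npij; apply: pip.
Qed.

Lemma mx_mask_eq1 pi p X : pattern_mx pi X ->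
  (forall i j, i != j -> pi i j -> ~~ p i j) -> mx_mask p X = 1%:M.
Proof.
move=> Xpi pinp; apply/matrixP => i j; rewrite !mxE.
have [->|nij /=] := eqVneq i j; first by rewrite Xpi.1.
by case: ifP => // pij; rewrite (pattern_mx0 Xpi nij) //; apply: contraTN pij; apply: pinp.
Qed.

Lemma mx_mask_sub1 p X Y :
  mx_mask p (X + Y - 1%:M) = mx_mask p X + mx_mask p Y - mx_mask p 1%:M.
Proof. by apply/matrixP => i j; rewrite !mxE; case: ifP; rewrite ?subr0 ?addr0. Qed.

Lemma mx_mask1 p : mx_mask p 1%:M = 1%:M.
Proof. by apply/matrixP => i j; rewrite !mxE; case: eqVneq => //= _; case: ifP. Qed.

Lemma mx_mask_add p X : (forall i, X i i = 1) ->
  mx_mask p X + mx_mask (fun i j => ~~ p i j) X - 1%:M = X.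
Proof.
move=> dX; apply/matrixP => i j; rewrite !mxE.
have [->|_] := eqVneq i j; first by rewrite dX addrK.
by case: (p i j); rewrite ?addr0 ?add0r subr0.
Qed.

Lemma UT_mask pi p X : offdiag_sub pi ->
  X \in UT F pi -> mx_mask p X \in UT F (fun i j => pi i j && p i j).
Proof.
move=> pi_tau /(UTP pi_tau)[dX oX]; apply/(UTP (offdiag_subI p pi_tau)).
split=> [i|i j nij]; rewrite mxE ?eqxx ?dX // (negbTE nij) /=.
by case: ifP => pij; rewrite ?eqxx // => /(oX _ _ nij) ->.
Qed.

Section MaskSplit.
Variables pi p : rel 'I_n.
Hypothesis pi_tau : offdiag_sub pi.
Let pi_in i j := pi i j && p i j.
Let pi_out i j := pi i j && ~~ p i j.
Let split_mx X := (mx_mask p X, mx_mask (fun i j => ~~ p i j) X).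

Lemma split_mx_inj : {in UT F pi &, injective split_mx}.
Proof.
move=> X Y /(UTP pi_tau)[dX _] /(UTP pi_tau)[dY _]; rewrite /split_mx => -[eXY eXY'].
by rewrite -(mx_mask_add p dX) -(mx_mask_add p dY) eXY eXY'.
Qed.

Lemma split_mx_UT : split_mx @: UT F pi = setX (UT F pi_in) (UT F pi_out).
Proof.
apply/eqP; rewrite eqEsubset; apply/andP; split.
  by apply/subsetP => _ /imsetP[X XU ->]; rewrite inE; apply/andP; split; apply: UT_mask.
have in_tau : offdiag_sub pi_in := offdiag_subI p pi_tau.
have out_tau : offdiag_sub pi_out := offdiag_subI (fun i j => ~~ p i j) pi_tau.
apply/subsetP => -[y z]; rewrite inE /= => /andP[/(UTP in_tau) ypi /(UTP out_tau) zpi].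
have [[dy oy] [dz oz]] := (ypi, zpi).
apply/imsetP; exists (y + z - 1%:M).
  apply/UTP => //; split=> [i|i j nij]; rewrite !mxE ?eqxx ?dy ?dz ?addrK //.
  rewrite (negbTE nij) subr0; have [y0|/(oy _ _ nij)/andP[]//] := eqVneq (y i j) 0.
  by rewrite y0 add0r => /(oz _ _ nij)/andP[].
have y_in i j : i != j -> pi_in i j -> p i j by move=> _ /andP[].
have y_out i j : i != j -> pi_in i j -> ~~ ~~ p i j by rewrite negbK; apply: y_in.
have z_out i j : i != j -> pi_out i j -> ~~ p i j by move=> _ /andP[].
rewrite /split_mx !mx_mask_sub1 !mx_mask1 (mx_mask_id ypi y_in) (mx_mask_eq1 zpi z_out).
by rewrite (mx_mask_eq1 ypi y_out) (mx_mask_id zpi z_out) addrK addrC addKr.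
Qed.

Lemma card_UT_split : #|UT F pi| = (#|UT F pi_in| * #|UT F pi_out|)%N.
Proof. by rewrite -cardsX -split_mx_UT card_in_imset //; apply: split_mx_inj. Qed.

Lemma sum_UT_mask (R : nmodType) (f : 'M[F]_n -> R) :
  \sum_(X in UT F pi) f (mx_mask p X) = (\sum_(y in UT F pi_in) f y) *+ #|UT F pi_out|.
Proof.
rewrite -[LHS](big_imset (fun yz => f yz.1) split_mx_inj) /= split_mx_UT.
rewrite (eq_bigl (fun yz => (yz.1 \in UT F pi_in) && (yz.2 \in UT F pi_out))); last first.
  by move=> yz; rewrite inE.
rewrite -(pair_big (mem (UT F pi_in)) (mem (UT F pi_out)) (fun y _ => f y)) /= -sumrMnl.
by apply: eq_bigr => y _; rewrite sumr_const.
Qed.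

End MaskSplit.
End PatternGroups.

Section SetCompositions.
Variable n : nat.
Implicit Types (C : seq {set 'I_n}) (c J : {set 'I_n}) (i j : 'I_n).

Lemma setI_neq0 c J i : i \in c -> i \in J -> c :&: J != set0.
Proof. by move=> ic iJ; apply/set0Pn; exists i; rewrite inE ic. Qed.

Lemma crestr_cons c C J : crestr (c :: C) J =
  if c :&: J != set0 then (c :&: J) :: crestr C J else crestr C J.
Proof. by rewrite /crestr /=; case: ifP. Qed.

Lemma has_crestr (a : pred {set 'I_n}) C J :
  has a (crestr C J) = has (fun c => (c :&: J != set0) && a (c :&: J)) C.
Proof.
rewrite has_map has_count count_filter -has_count.
by apply: eq_has => c /=; rewrite andbC.
Qed.

Lemma eqrel_crestr C J i j :
  eqrel (crestr C J) i j = [&& i \in J, j \in J & eqrel C i j].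
Proof.
rewrite /eqrel has_crestr; case iJ: (i \in J); case jJ: (j \in J) => /=.
- apply: eq_has => c /=; rewrite !inE iJ jJ !andbT.
  by case ic: (i \in c); rewrite ?andbF //= (setI_neq0 ic iJ).
all: by apply/hasPn => c _; rewrite !inE ?iJ ?jJ !andbF.
Qed.

Lemma eqrel_tits B A i j : eqrel (tits B A) i j = eqrel B i j && eqrel A i j.
Proof.
rewrite /tits; elim: B => [|b B IHB] //=.
rewrite {1}/eqrel has_cat -/(eqrel (crestr A b) i j) -/(eqrel (flatten _) i j) IHB.
by rewrite eqrel_crestr andb_orl andbA.
Qed.

Lemma ascrelP C i j :
  reflect (exists r s, [/\ (r < s)%N, i \in nth set0 C r & j \in nth set0 C s])
          (ascrel C i j).
Proof.
apply: (iffP existsP) => [[r /existsP[s /and3P[lt ir js]]] | [r [s [lt ir js]]]].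
  by exists r, s.
have sC : (s < size C)%N.
  by rewrite ltnNge; apply: contraL js => /(nth_default set0) ->; rewrite inE.
have rC : (r < size C)%N by apply: ltn_trans sC.
by exists (Ordinal rC); apply/existsP; exists (Ordinal sC); rewrite /= lt ir js.
Qed.

Lemma ascrel_nil i j : ascrel [::] i j = false.
Proof. by apply/ascrelP => -[r [s [_ ir _]]]; rewrite nth_nil inE in ir. Qed.

Lemma ascrel_cons c C i j :
  ascrel (c :: C) i j = (i \in c) && has (fun d : {set 'I_n} => j \in d) C || ascrel C i j.
Proof.
apply/ascrelP/orP => [[[|r] [[|s] [//= lt ir js]]] | ].
- left; rewrite ir; apply/(has_nthP set0); exists s => //.
  by rewrite ltnNge; apply: contraL js => /(nth_default set0) ->; rewrite inE.
- by right; apply/ascrelP; exists r, s.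
case=> [/andP[ic /(has_nthP set0)[s _ js]] | /ascrelP[r [s [lt ir js]]]].
  by exists 0%N, s.+1.
by exists r.+1, s.+1.
Qed.

Lemma ascrel_crestr C J i j : i \in J -> j \in J ->
  ascrel (crestr C J) i j = ascrel C i j.
Proof.
move=> iJ jJ; elim: C => [|c C IHC]; first by rewrite !ascrel_nil.
have hasJ : has (fun d : {set 'I_n} => j \in d) (crestr C J) =
            has (fun d : {set 'I_n} => j \in d) C.
  rewrite has_crestr; apply: eq_has => d /=; rewrite inE jJ andbT.
  by case jd: (j \in d); rewrite ?andbF ?(setI_neq0 jd jJ).
rewrite crestr_cons; case: ifP => [_|/negbFE/eqP cJ0]; rewrite !ascrel_cons IHC.
  by rewrite inE iJ andbT hasJ.
suff -> : i \in c = false by [].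
by apply: contra_eqF cJ0 => ic; rewrite (negbTE (setI_neq0 ic iJ)) ?eqxx.
Qed.

End SetCompositions.

Section BlockIndex.
Variables (n : nat) (A : seq {set 'I_n}).
Hypothesis A_setcomp : is_setcomp [set: 'I_n] A.
Implicit Types (i j : 'I_n) (J : {set 'I_n}).

Definition block_index i : nat := find (fun a : {set 'I_n} => i \in a) A.

Lemma has_block i : has (fun a : {set 'I_n} => i \in a) A.
Proof.
case/and3P: A_setcomp => _ _ /eqP covA.
have : i \in \bigcup_(a <- A) a by rewrite covA inE.
by rewrite bigcup_seq => /bigcupP[a aA ia]; apply/hasP; exists a.
Qed.

Lemma mem_nth_block_index i : i \in nth set0 A (block_index i).
Proof. exact: nth_find (has_block i). Qed.

Lemma block_index_lt i : (block_index i < size A)%N.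
Proof. by rewrite -has_find has_block. Qed.

Lemma nth_block_index r i : i \in nth set0 A r -> r = block_index i.
Proof.
have size_gt t : i \in nth set0 A t -> (t < size A)%N.
  by move=> it; rewrite ltnNge; apply: contraL it => /(nth_default set0) ->; rewrite inE.
move=> ir; have ii := mem_nth_block_index i; have /and3P[_ /(pairwiseP set0) disjA _] := A_setcomp.
have [lt|lt|//] := ltngtP r (block_index i).
  by have /disjointFr/(_ ir) := disjA _ _ (size_gt _ ir) (block_index_lt i) lt; rewrite ii.
by have /disjointFr/(_ ii) := disjA _ _ (block_index_lt i) (size_gt _ ir) lt; rewrite ir.
Qed.

Lemma eqrel_block_index i j : eqrel A i j = (block_index i == block_index j).
Proof.
apply/hasP/eqP => [[a aA /andP[ia ja]] | eij].
  rewrite -(nth_index set0 aA) in ia ja.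
  by rewrite -(nth_block_index ia) -(nth_block_index ja).
exists (nth set0 A (block_index i)); first exact/mem_nth/block_index_lt.
by rewrite mem_nth_block_index eij mem_nth_block_index.
Qed.

Lemma ascrel_block_index i j : ascrel A i j = (block_index i < block_index j)%N.
Proof.
apply/ascrelP/idP => [[r [s [lt ir js]]] | lt].
  by rewrite -(nth_block_index ir) -(nth_block_index js).
by exists (block_index i), (block_index j); rewrite lt !mem_nth_block_index.
Qed.

Lemma eqrel_refl i : eqrel A i i.
Proof. by rewrite eqrel_block_index. Qed.

Lemma mem_block J i j : J \in A -> i \in J -> (j \in J) = eqrel A i j.
Proof.
move=> JA iJ; rewrite eqrel_block_index; rewrite -(nth_index set0 JA) in iJ *.
rewrite -(nth_block_index iJ); apply/idP/eqP => [/nth_block_index//|->].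
exact: mem_nth_block_index.
Qed.

End BlockIndex.

Section Inflation.
Variables (F : finFieldType) (n : nat) (tau : rel 'I_n) (A : seq {set 'I_n}).
Hypotheses (tau_total : total_order tau) (A_setcomp : is_setcomp [set: 'I_n] A)
  (ascA_tau : forall i j, ascrel A i j -> tau i j).
Implicit Types (X Y : 'M[F]_n).

Local Notation bidx := (block_index A).
Local Notation maskA := (mx_mask (eqrel A)).

Lemma tau_block_index i j : tau i j -> (bidx i <= bidx j)%N.
Proof.
move=> tij; rewrite leqNgt; apply/negP => lt.
have tji : tau j i by apply: ascA_tau; rewrite (ascrel_block_index A_setcomp).
case: tau_total => _ tau_anti _ _.
by move: lt; rewrite (tau_anti i j) ?tij ?tji ?ltnn.
Qed.

Definition block_upper X := forall i j, X i j != 0 -> (bidx i <= bidx j)%N.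

Lemma block_upper_UT pi X : offdiag_sub tau pi -> X \in UT F pi -> block_upper X.
Proof.
move=> pi_tau /(UTP tau_total pi_tau)[_ Xpi] i j nz; move/offdiag_subP: pi_tau => pi_tau.
have [->//|nij] := eqVneq i j.
exact/tau_block_index/(pi_tau _ _ nij)/(Xpi _ _ nij nz).
Qed.

Lemma mx_mask_eqrelE X i j : maskA X i j = if bidx i == bidx j then X i j else 0.
Proof.
rewrite mxE -(eqrel_block_index A_setcomp).
by case: eqVneq => [->|_] /=; rewrite ?(eqrel_refl A_setcomp).
Qed.

(* For block upper triangular X and Y, an entry of X *m Y inside a diagonal block only
   involves entries of X and Y inside that block. *)
Lemma mx_mask_eqrel_mulmx X Y : block_upper X -> block_upper Y ->
  maskA (X *m Y) = maskA X *m maskA Y.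
Proof.
move=> Xup Yup; apply/matrixP => i j; rewrite mx_mask_eqrelE !mxE.
case: eqP => [eij|nij]; last first.
  rewrite big1 // => k _; rewrite !mx_mask_eqrelE.
  by case: eqP => eik; [case: eqP => ekj; [lia | rewrite mulr0] | rewrite mul0r].
apply: eq_bigr => k _; rewrite !mx_mask_eqrelE -eij.
case: eqP => [->|nik]; first by rewrite eqxx.
rewrite mul0r; have [->|/Xup le_ik] := eqVneq (X i k) 0; first by rewrite mul0r.
have [->|/Yup le_kj] := eqVneq (Y k j) 0; first by rewrite mulr0.
by move: nik; rewrite -eij in le_kj; lia.
Qed.

Section Sigma.
Variable sigma : rel 'I_n.
Hypotheses (sigma_tau : offdiag_sub tau sigma) (sigma_trans : transitive sigma).

Lemma offdiag_sub_UL : offdiag_sub tau (fun i j => sigma i j && eqrel A i j).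
Proof. exact: offdiag_subI. Qed.

Lemma offdiag_sub_UR : offdiag_sub tau (fun i j => (i == j) || sigma i j && ascrel A i j).
Proof.
have /offdiag_subP sub := sigma_tau.
by apply/offdiag_subP => i j nij; rewrite (negbTE nij) => /andP[/(sub _ _ nij)].
Qed.

Lemma transitive_UL : transitive (fun i j => sigma i j && eqrel A i j).
Proof.
move=> k i j /andP[sik eik] /andP[skj ekj]; rewrite (sigma_trans sik skj) /=.
by move: eik ekj; rewrite !(eqrel_block_index A_setcomp) => /eqP ->.
Qed.

Lemma mx_mask_UL X : X \in UL F sigma A -> maskA X = X.
Proof. by move/(UTP tau_total offdiag_sub_UL)/mx_mask_id; apply=> i j _ /andP[]. Qed.

Lemma mx_mask_UR Y : Y \in UR F sigma A -> maskA Y = 1%:M.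
Proof.
move/(UTP tau_total offdiag_sub_UR)/mx_mask_eq1; apply=> i j nij.
rewrite (negbTE nij) (ascrel_block_index A_setcomp) (eqrel_block_index A_setcomp).
by case/andP=> _ /ltn_eqF ->.
Qed.

Lemma mx_mask_UL_UR X Y : X \in UL F sigma A -> Y \in UR F sigma A -> maskA (X *m Y) = X.
Proof.
move=> XL YR; have Xup : block_upper X := block_upper_UT offdiag_sub_UL XL.
have Yup : block_upper Y := block_upper_UT offdiag_sub_UR YR.
by rewrite mx_mask_eqrel_mulmx // mx_mask_UL // mx_mask_UR // mulmx1.
Qed.

Lemma UT_UL_mask g : g \in UT F sigma -> maskA g \in UL F sigma A.
Proof. exact: (UT_mask tau_total (eqrel A) sigma_tau). Qed.

Lemma UT_UR_factor g : g \in UT F sigma -> invmx (maskA g) *m g \in UR F sigma A.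
Proof.
move=> gS; have lL := UT_UL_mask gS.
have l'L : invmx (maskA g) \in UL F sigma A.
  exact: (UT_invmx tau_total offdiag_sub_UL transitive_UL lL).
have l'S : invmx (maskA g) \in UT F sigma by apply: UT_subrel l'L => i j _ /andP[].
have /(UTP tau_total sigma_tau)[dr Sr] := UT_mulmx tau_total sigma_tau sigma_trans l'S gS.
have mask_r : maskA (invmx (maskA g) *m g) = 1%:M.
  have l'up : block_upper (invmx (maskA g)) := block_upper_UT offdiag_sub_UL l'L.
  have gup : block_upper g := block_upper_UT sigma_tau gS.
  by rewrite mx_mask_eqrel_mulmx // mx_mask_UL // mulVmx // (UT_unitmx lL).
apply/(UTP tau_total offdiag_sub_UR); split=> // i j nij nz.
rewrite (negbTE nij) (Sr _ _ nij nz) (ascrel_block_index A_setcomp) ltn_neqAle.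
have /offdiag_subP sub := sigma_tau.
rewrite (tau_block_index (sub _ _ nij (Sr _ _ nij nz))) andbT.
apply: contra nz => /eqP eij.
have := congr1 (fun M : 'M[F]_n => M i j) mask_r.
by rewrite mx_mask_eqrelE eij eqxx => ->; rewrite mxE (negbTE nij).
Qed.

(* Inf psi (l r) = psi l, where l is recovered from g = l r as its A-block-diagonal part. *)
Lemma infl_mx_mask (psi : cfun F n) g : g \in UT F sigma ->
  infl (UL F sigma A) (UR F sigma A) psi g = psi (maskA g).
Proof.
move=> gS; rewrite /infl; case: pickP => [[l r] /= /and3P[lL rR /eqP <-] | none].
  by rewrite mx_mask_UL_UR.
have lu : maskA g \in unitmx by apply: UT_unitmx (UT_UL_mask gS).
have := none (maskA g, invmx (maskA g) *m g).
by rewrite /= UT_UL_mask // UT_UR_factor // mulKVmx // eqxx.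
Qed.

End Sigma.
End Inflation.

Section Translation.
Variables (F : finFieldType) (n : nat).
Implicit Types (S T : {set 'M[F]_n}) (g h : 'M[F]_n).

Lemma resf_delta S g h : h \in unitmx ->
  resf S (delta g) h = #|S|%:R^-1 * (invmx h *m g \in S)%:R.
Proof.
move=> hu; rewrite /resf /delta; congr (_ * _); rewrite -sum_indicator.
apply: eq_bigr => x _; suff -> : (h *m x == g) = (x == invmx h *m g) by [].
by apply/eqP/eqP => [<-|->]; rewrite ?mulKmx ?mulKVmx.
Qed.

Lemma sum_translate S T h (f : 'M[F]_n -> algC) : h \in unitmx ->
  [set h *m y | y in S] \subset T ->
  \sum_(g in T) (invmx h *m g \in S)%:R * f g = \sum_(y in S) f (h *m y).
Proof.
move=> hu /subsetP hST.
have mulh_inj : injective (@mulmx _ n n n h) := can_inj (mulKmx hu).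
have mem_hS g : (g \in [set h *m y | y in S]) = (invmx h *m g \in S).
  apply/imsetP/idP => [[y yS ->]|gS]; first by rewrite mulKmx.
  by exists (invmx h *m g); rewrite ?mulKVmx.
rewrite -(big_imset _ (in2W mulh_inj)) /=.
rewrite [RHS](eq_bigl (fun g => (g \in T) && (invmx h *m g \in S))); last first.
  by move=> g; rewrite mem_hS andb_idl // -mem_hS => /hST.
by rewrite big_mkcondr; apply: eq_bigr => g _; case: (_ \in S); rewrite ?mul1r ?mul0r.
Qed.

End Translation.

Section Blocks.
Variables (F : finFieldType) (n : nat).
Implicit Types (J : {set 'I_n}) (X Y : 'M[F]_n).

Lemma blkE J X i j : blk J X i j = if (i \in J) && (j \in J) then X i j else (i == j)%:R.
Proof. by rewrite mxE. Qed.

Lemma mx_mask_blk p J X : mx_mask p (blk J X) = blk J (mx_mask p X).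
Proof.
apply/matrixP => i j; rewrite !(mxE, blkE); case: ((i \in J) && (j \in J)) => //.
by case: eqVneq => //= _; case: ifP.
Qed.

Lemma blk_mulmx J X Y : (forall i k, i \in J -> k \notin J -> X i k = 0) ->
  blk J (X *m Y) = blk J X *m blk J Y.
Proof.
move=> XJ; apply/matrixP => i j; rewrite blkE [RHS]mxE.
have [iJ|iJ] /= := boolP (i \in J); last first.
  rewrite (bigD1 i) //= big1 => [|k /negPf nki]; rewrite !blkE (negPf iJ) /= ?eqxx ?mul1r.
    by rewrite addr0.
  by rewrite eq_sym nki mul0r.
have [jJ|jJ] /= := boolP (j \in J); last first.
  rewrite (bigD1 j) //= big1 => [|k /negPf nkj]; rewrite !blkE (negPf jJ) !andbF ?eqxx ?mulr1.
    by rewrite addr0.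
  by rewrite nkj mulr0.
rewrite mxE; apply: eq_bigr => k _; rewrite !blkE iJ jJ /=.
have [//|kJ] := boolP (k \in J); have nik : i != k by apply: contraNneq kJ => <-.
by rewrite (negPf nik) mul0r XJ // mul0r.
Qed.

Lemma eq_blk (B : seq {set 'I_n}) X Y :
  (forall i j, ~~ eqrel B i j -> X i j = 0) -> (forall i j, ~~ eqrel B i j -> Y i j = 0) ->
  all (fun J => blk J X == blk J Y) B = (X == Y).
Proof.
move=> XB YB; apply/allP/eqP => [eXY | -> J _ //]; apply/matrixP => i j.
have [/hasP[J JB /andP[iJ jJ]] | nij] := boolP (eqrel B i j); last by rewrite XB ?YB.
by have /eqP/matrixP/(_ i j) := eXY J JB; rewrite !blkE iJ jJ.
Qed.

End Blocks.

Section Restriction.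
Variables (F : finFieldType) (n : nat) (tau : rel 'I_n).
Implicit Types (C : seq {set 'I_n}) (J : {set 'I_n}).

Lemma UL_crestr C J : UL F (rrestr tau J) (crestr C J) = UL F (rrestr tau J) C.
Proof.
apply: eq_UT => i j _; rewrite eqrel_crestr /rrestr.
by case: (i \in J); case: (j \in J); rewrite ?andbF.
Qed.

Lemma UR_crestr C J : UR F (rrestr tau J) (crestr C J) = UR F (rrestr tau J) C.
Proof.
apply: eq_UT => i j _; rewrite /rrestr; case: (i == j) => //=.
by case iJ: (i \in J); case jJ: (j \in J); rewrite ?andbF //= ascrel_crestr.
Qed.

Hypothesis tau_total : total_order tau.

Lemma rrestr_trans J : transitive (rrestr tau J).
Proof.
move=> k i j /and3P[tik iJ _] /and3P[tkj _ jJ].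
by rewrite /rrestr (tau_trans tau_total tik tkj) iJ jJ.
Qed.

Lemma blk_UT J X : X \in UT F tau -> blk J X \in UT F (rrestr tau J).
Proof.
have tau_tau := offdiag_sub_tau tau.
move=> /(UTP tau_total tau_tau)[dX oX].
apply/(UTP tau_total (offdiag_subI (fun i j => (i \in J) && (j \in J)) tau_tau)).
split=> [i|i j nij]; rewrite blkE; first by case: ifP; rewrite ?dX ?eqxx.
case: ifP => [_ nz | _]; last by rewrite (negbTE nij) eqxx.
by rewrite (oX _ _ nij nz).
Qed.

End Restriction.

Section Proposition.
Variables (F : finFieldType) (n : nat) (tau : rel 'I_n) (A B : seq {set 'I_n}).
Hypotheses (tau_total : total_order tau) (A_setcomp : is_setcomp [set: 'I_n] A)
  (B_setcomp : is_setcomp [set: 'I_n] B) (ascA_tau : forall i j, ascrel A i j -> tau i j).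

Local Notation maskA := (mx_mask (eqrel A)).

Definition UR_UL := UT F (fun i j => [&& tau i j, ascrel B i j & eqrel A i j]).

Lemma resf_infl (psi : cfun F n) h : h \in UT F tau ->
  resf (UR F tau B) (infl (UL F tau A) (UR F tau A) psi) h =
  #|UR_UL|%:R^-1 * \sum_(y in UR_UL) psi (maskA h *m y).
Proof.
move=> hT; pose piB i j := (i == j) || tau i j && ascrel B i j.
have piB_tau : offdiag_sub tau piB.
  by apply/offdiag_subP => i j nij; rewrite /piB (negbTE nij) => /andP[].
have piB_A : UT F (fun i j => piB i j && eqrel A i j) = UR_UL.
  by rewrite /UR_UL; apply: eq_UT => i j nij; rewrite /piB (negbTE nij) andbA.
have tau_tau := offdiag_sub_tau tau.
have hup := block_upper_UT tau_total A_setcomp ascA_tau tau_tau hT.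
rewrite /resf (eq_bigr (fun x => psi (maskA h *m maskA x))); last first.
  move=> x xB; have xT : x \in UT F tau.
    by apply: UT_subrel xB => i j nij; rewrite (negbTE nij) => /andP[].
  have xup := block_upper_UT tau_total A_setcomp ascA_tau tau_tau xT.
  have hxT := UT_mulmx tau_total tau_tau (tau_trans tau_total) hT xT.
  rewrite (infl_mx_mask tau_total A_setcomp ascA_tau tau_tau (tau_trans tau_total)) //.
  by rewrite mx_mask_eqrel_mulmx.
rewrite /UR (sum_UT_mask tau_total (eqrel A) piB_tau (fun y => psi (maskA h *m y))).
rewrite (card_UT_split F tau_total (eqrel A) piB_tau).
rewrite piB_A natrM invfM -mulrA; congr (_ * _).
have out_gt0 : (0 < #|UT F (fun i j => piB i j && ~~ eqrel A i j)|)%N.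
  by apply/card_gt0P; exists 1%:M; exact: (UT1 F tau_total (offdiag_subI _ piB_tau)).
by rewrite -[X in _ * X]mulr_natl mulrA mulVf ?mul1r // pnatr_eq0 -lt0n.
Qed.

Lemma UL_tits_mask h : h \in UL F tau B -> maskA h \in UL F tau (tits B A).
Proof.
move=> hB; have tauB := offdiag_subI (eqrel B) (offdiag_sub_tau tau).
apply: UT_subrel (UT_mask tau_total (eqrel A) tauB hB) => i j _ /andP[/andP[tij eB] eA].
by rewrite tij eqrel_tits eB eA.
Qed.

Lemma UL_tits_entry0 X i j : X \in UL F tau (tits B A) -> ~~ eqrel B i j -> X i j = 0.
Proof.
move=> /(UTP tau_total (offdiag_subI _ (offdiag_sub_tau tau))) XL nBij.
have nij : i != j by apply: contraNneq nBij => ->; exact: (eqrel_refl B_setcomp).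
by rewrite (pattern_mx0 XL nij) // eqrel_tits (negbTE nBij) andbF.
Qed.

Lemma tensor_infl_delta h g : h \in UL F tau B -> g \in UL F tau (tits B A) ->
  \prod_(J <- B) infl (UL F (rrestr tau J) (crestr A J)) (UR F (rrestr tau J) (crestr A J))
                     (delta (blk J g)) (blk J h) = (maskA h == g)%:R.
Proof.
move=> hB gL; have hT : h \in UT F tau by apply: UT_subrel hB => i j _ /andP[].
rewrite (eq_bigr (fun J => (blk J (maskA h) == blk J g)%:R)) => [|J _].
  rewrite prod_indicator eq_blk // => i j; apply: UL_tits_entry0 => //.
  exact: UL_tits_mask.
have tauJ : offdiag_sub tau (rrestr tau J) := offdiag_subI _ (offdiag_sub_tau tau).
have transJ : transitive (rrestr tau J) := rrestr_trans tau_total (J := J).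
rewrite UL_crestr UR_crestr (infl_mx_mask tau_total A_setcomp ascA_tau tauJ transJ) ?blk_UT //.
by rewrite mx_mask_blk.
Qed.

Lemma card_UR_blocks S : pairwise (fun a b : {set 'I_n} => [disjoint a & b]) S ->
  #|UT F (fun i j => [&& tau i j, ascrel B i j & eqrel S i j])| =
  (\prod_(J <- S) #|UR F (rrestr tau J) B|)%N.
Proof.
elim: S => [_|c S IHS /= /andP[/allP c_disj S_disj]].
  by rewrite big_nil (UT_diag F tau_total) ?cards1 // => i j _; rewrite /eqrel /= !andbF.
have tauBS := offdiag_subI (fun i j => ascrel B i j && eqrel (c :: S) i j) (offdiag_sub_tau tau).
rewrite big_cons -IHS // (card_UT_split F tau_total (fun i j => (i \in c) && (j \in c)) tauBS).
congr (_ * _)%N; apply: (congr1 (fun U : {set 'M[F]_n} => #|U|)).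
  apply: eq_UT => i j nij; rewrite /eqrel /= (negbTE nij) /rrestr.
  by case: (tau i j); case: (ascrel B i j); case: (i \in c); case: (j \in c); rewrite ?andbF.
apply: eq_UT => i j _; rewrite {1}/eqrel /= -/(eqrel S i j).
case ic: (i \in c); case jc: (j \in c); rewrite ?andbF ?andbT //=.
apply/esym/negbTE/and3P => -[_ _ /hasP[d dS /andP[id _]]].
by have /disjointFr/(_ ic) := c_disj d dS; rewrite id.
Qed.

Lemma all_blk_UR z : z \in UL F tau A ->
  all (fun J => blk J z \in UR F (rrestr tau J) B) A = (z \in UR_UL).
Proof.
have tauAB := offdiag_subI (fun i j => ascrel B i j && eqrel A i j) (offdiag_sub_tau tau).
have tauJ J : offdiag_sub tau (fun i j => (i == j) || rrestr tau J i j && ascrel B i j).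
  by apply/offdiag_subP => i j nij; rewrite (negbTE nij) => /andP[/and3P[]].
move=> /(UTP tau_total (offdiag_subI _ (offdiag_sub_tau tau)))[dz oz].
apply/allP/(UTP tau_total tauAB) => [zB | [_ zAB] J JA].
  split=> // i j nij nz; have /andP[tij eA] := oz _ _ nij nz.
  have /hasP[J JA /andP[iJ jJ]] := eA.
  have /(UTP tau_total (tauJ J))[_ zJ] := zB J JA.
  have := zJ i j nij; rewrite blkE iJ jJ (negbTE nij) => /(_ nz) /andP[_ aB].
  by rewrite tij aB eA.
apply/(UTP tau_total (tauJ J)); split=> [i|i j nij]; rewrite blkE.
  by case: ifP; rewrite ?dz ?eqxx.
case: ifP => [/andP[iJ jJ] nz | _]; last by rewrite (negbTE nij) eqxx.
by case/and3P: (zAB _ _ nij nz) => tij aB _; rewrite (negbTE nij) /rrestr tij iJ jJ aB.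
Qed.

Lemma tensor_resf_delta h g : h \in UL F tau A -> g \in UL F tau A ->
  \prod_(J <- A) resf (UR F (rrestr tau J) (crestr B J)) (delta (blk J g)) (blk J h) =
  #|UR_UL|%:R^-1 * (invmx h *m g \in UR_UL)%:R.
Proof.
move=> hA gA; set z := invmx h *m g.
have tauA := offdiag_subI (eqrel A) (offdiag_sub_tau tau).
have transA := transitive_UL A_setcomp (tau_trans tau_total).
have zA : z \in UL F tau A.
  exact: (UT_mulmx tau_total tauA transA (UT_invmx tau_total tauA transA hA) gA).
have hT : h \in UT F tau by apply: UT_subrel hA => i j _ /andP[].
rewrite (eq_big_seq (fun J => #|UR F (rrestr tau J) B|%:R^-1 *
                              (blk J z \in UR F (rrestr tau J) B)%:R)) => [|J JA].
  rewrite big_split /= prodfV -natr_prod prod_indicator -card_UR_blocks ?all_blk_UR //.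
  by case/and3P: A_setcomp.
have blk_g : blk J g = blk J h *m blk J z.
  rewrite -blk_mulmx /z ?mulKVmx ?(UT_unitmx hA) // => i k iJ kJ.
  have nik : i != k by apply: contraNneq kJ => <-.
  rewrite (pattern_mx0 (UTP tau_total tauA _ hA) nik) //.
  by rewrite -(mem_block A_setcomp k JA iJ) (negbTE kJ) andbF.
have hJu := UT_unitmx (blk_UT tau_total J hT).
by rewrite UR_crestr resf_delta // blk_g mulKmx.
Qed.

Lemma tensor_infl_resf (psi : cfun F n) h : h \in UL F tau B ->
  tensor_map B
    (fun J => infl (UL F (rrestr tau J) (crestr A J)) (UR F (rrestr tau J) (crestr A J)))
    (UL F tau (tits B A))
    (tensor_map A (fun J => resf (UR F (rrestr tau J) (crestr B J))) (UL F tau A) psi) h =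
  #|UR_UL|%:R^-1 * \sum_(y in UR_UL) psi (maskA h *m y).
Proof.
move=> hB; have h'L := UL_tits_mask hB; set h' := maskA h in h'L *.
have h'A : h' \in UL F tau A.
  by apply: UT_subrel h'L => i j _ /andP[-> /=]; rewrite eqrel_tits => /andP[].
have tauA := offdiag_subI (eqrel A) (offdiag_sub_tau tau).
have transA := transitive_UL A_setcomp (tau_trans tau_total).
rewrite {1}/tensor_map (eq_bigr (fun g => (h' == g)%:R *
  tensor_map A (fun J => resf (UR F (rrestr tau J) (crestr B J))) (UL F tau A) psi g)); last first.
  by move=> g gL; rewrite tensor_infl_delta.
rewrite (bigD1 h') //= eqxx mul1r big1 ?addr0 => [|g /andP[_ /negbTE]]; last first.
  by rewrite eq_sym => ->; rewrite mul0r.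
rewrite /tensor_map (eq_bigr (fun g =>
  #|UR_UL|%:R^-1 * ((invmx h' *m g \in UR_UL)%:R * psi g))) => [|g gA]; last first.
  by rewrite tensor_resf_delta // mulrA.
rewrite -mulr_sumr sum_translate ?(UT_unitmx h'A) //.
apply/subsetP => _ /imsetP[y yQ ->]; apply: (UT_mulmx tau_total tauA transA h'A).
by apply: UT_subrel yQ => i j _ /and3P[-> _ ->].
Qed.

End Proposition.

Theorem proposition4p11 (F : finFieldType) (n : nat) (tau : rel 'I_n)
    (A B : seq {set 'I_n}) :
  total_order tau ->
  is_setcomp [set: 'I_n] A -> is_setcomp [set: 'I_n] B ->
  (forall i j, ascrel A i j -> tau i j) ->
  forall psi : cfun F n, is_classfun (UL F tau A) psi ->
  forall h, h \in UL F tau B ->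
    resf (UR F tau B) (infl (UL F tau A) (UR F tau A) psi) h =
    tensor_map B
      (fun J => infl (UL F (rrestr tau J) (crestr A J))
                     (UR F (rrestr tau J) (crestr A J)))
      (UL F tau (tits B A))
      (tensor_map A
         (fun J => resf (UR F (rrestr tau J) (crestr B J)))
         (UL F tau A) psi)
      h.
Proof.
(* The identity holds for every function psi. *)
move=> tau_total A_setcomp B_setcomp ascA_tau psi _ h hB.
have hT : h \in UT F tau by apply: UT_subrel hB => i j _ /andP[].
rewrite (resf_infl B tau_total A_setcomp ascA_tau) //.
by rewrite (tensor_infl_resf tau_total A_setcomp B_setcomp ascA_tau).
Qed.
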